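(* Let $G=\mathrm{GL}_n(D)$, let $P_0$ be the subgroup of upper triangular matrices in $G$, $T$ the subgroup of diagonal matrices with entries in $F^\times$, $M_0$ the subgroup of diagonal matrices with entries in $D^\times$ (the centralizer of $T$), and $N_G(T)$ the normalizer of $T$ in $G$. Let $\theta(g)=J_n\,{}^t\bar{g}^{-1}J_n$, $X=\{x\in G : x\theta(x)=I_n\}$, with $G$ acting on $X$ by $g\cdot x = g x\theta(g)^{-1}$. Then for each $x\in X$ the set $(P_0\cdot x)\cap N_G(T)$ is non-empty, and the map $P_0\cdot x\mapsto (P_0\cdot x)\cap N_G(T)$ is a bijection from the set $P_0\backslash X$ of $P_0$-orbits in $X$ onto the set $M_0\backslash (X\cap N_G(T))$ of $M_0$-orbits in $X\cap N_G(T)$.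
   Context: $F$ is a non-archimedean local field of characteristic zero, $D$ the unique quaternion division algebra over $F$, with reduced trace $\mathrm{Trd}$ and involution $\bar{x} = \mathrm{Trd}(x) - x$; for a matrix $g=(g_{ij})$, ${}^t\bar{g}=(\bar g_{ji})$. $J_n$ is the $n\times n$ antidiagonal matrix with antidiagonal entries $1$. The fixed points of $\theta$ form $\mathrm{Sp}_n(D)$, and $X\cong G/\mathrm{Sp}_n(D)$ via $g\mapsto g\cdot I_n$. *)

From HB Require Import structures.
From mathcomp Require Import all_boot all_order all_algebra.
From mathcomp Require Import ring.
From mathcomp Require Import reals.
From Stdlib Require Import ClassicalEpsilon.

Set Implicit Arguments.
Unset Strict Implicit.
Unset Printing Implicit Defensive.

Import Order.TTheory GRing.Theory Num.Theory.
Local Open Scope ring_scope.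

Definition cauchy_seq (F : fieldType) (R : realType) (abs : F -> R)
  (u : nat -> F) : Prop :=
  forall e : R, 0 < e -> exists N : nat, forall m n : nat,
    (N <= m)%N -> (N <= n)%N -> abs (u m - u n) < e.

Definition converges_to (F : fieldType) (R : realType) (abs : F -> R)
  (u : nat -> F) (l : F) : Prop :=
  forall e : R, 0 < e -> exists N : nat, forall n : nat,
    (N <= n)%N -> abs (u n - l) < e.

Record nonarch_local_field_char0 (F : fieldType) (R : realType)
    (abs : F -> R) : Prop := {
  nlf_char0 : [pchar F] =i pred0;
  nlf_abs_ge0 : forall x, 0 <= abs x;
  nlf_abs_eq0 : forall x, abs x = 0 <-> x = 0;
  nlf_absM : forall x y, abs (x * y) = abs x * abs y;
  nlf_ultra : forall x y, abs (x + y) <= Num.max (abs x) (abs y);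
  nlf_discrete : exists pi : F, 0 < abs pi < 1 /\
      forall x, x != 0 -> exists k : int, abs x = abs pi ^ k;
  nlf_complete : forall u : nat -> F, cauchy_seq abs u ->
      exists l, converges_to abs u l;
  nlf_finite_residue : exists s : seq F, forall x, abs x <= 1 ->
      exists2 y, y \in s & abs (x - y) < 1
}.

(* Quaternion algebra (a,b)_F with basis 1, i, j, k = ij,              *)
(* i^2 = a, j^2 = b, ij = -ji.                                          *)
Record qrec (F : Type) := Quat { q0 : F; q1 : F; q2 : F; q3 : F }.
Arguments Quat {F}.

(* the carrier of (a,b)_F; it depends on a, b so that each (a,b)_F carries *)
(* its own canonical ring structure                                        *)
Definition quat (F : fieldType) (a b : F) : Type := qrec F.

Section Quaternion.
Variables (F : fieldType) (a b : F).
Local Notation quat := (quat a b).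

Definition quat_tuple (x : quat) : F * F * F * F := (q0 x, q1 x, q2 x, q3 x).
Definition tuple_quat (t : F * F * F * F) : quat :=
  let: (x0, x1, x2, x3) := t in Quat x0 x1 x2 x3.
Lemma quat_tupleK : cancel quat_tuple tuple_quat. Proof. by case. Qed.

HB.instance Definition _ := Choice.copy quat (can_type quat_tupleK).

Definition qzero : quat := Quat (0 : F) 0 0 0.
Definition qadd (x y : quat) : quat :=
  Quat (q0 x + q0 y) (q1 x + q1 y) (q2 x + q2 y) (q3 x + q3 y).
Definition qopp (x : quat) : quat := Quat (- q0 x) (- q1 x) (- q2 x) (- q3 x).

Lemma qaddA : associative qadd.
Proof. by case=> ? ? ? ?; case=> ? ? ? ?; case=> ? ? ? ?; rewrite /qadd /= !addrA. Qed.
Lemma qaddC : commutative qadd.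
Proof. by case=> ? ? ? ?; case=> ? ? ? ?; rewrite /qadd /= [X in Quat X _ _ _]addrC
  [X in Quat _ X _ _]addrC [X in Quat _ _ X _]addrC [X in Quat _ _ _ X]addrC. Qed.
Lemma qadd0 : left_id qzero qadd.
Proof. by case=> ? ? ? ?; rewrite /qadd /= !add0r. Qed.
Lemma qaddN : left_inverse qzero qopp qadd.
Proof. by case=> ? ? ? ?; rewrite /qadd /= !addNr. Qed.

HB.instance Definition _ := GRing.isZmodule.Build quat qaddA qaddC qadd0 qaddN.

Definition qone : quat := Quat (1 : F) 0 0 0.
Definition qmul (x y : quat) : quat :=
  let: Quat x0 x1 x2 x3 := x in let: Quat y0 y1 y2 y3 := y in
  Quat (x0 * y0 + a * x1 * y1 + b * x2 * y2 - a * b * x3 * y3)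
       (x0 * y1 + x1 * y0 - b * x2 * y3 + b * x3 * y2)
       (x0 * y2 + x2 * y0 + a * x1 * y3 - a * x3 * y1)
       (x0 * y3 + x3 * y0 + x1 * y2 - x2 * y1).

Lemma qmulA : associative qmul.
Proof. by case=> ? ? ? ?; case=> ? ? ? ?; case=> ? ? ? ?; rewrite /qmul /=; congr Quat; ring. Qed.
Lemma qmul1 : left_id qone qmul.
Proof. by case=> ? ? ? ?; rewrite /qmul /qone /=; congr Quat; ring. Qed.
Lemma qmulr1 : right_id qone qmul.
Proof. by case=> ? ? ? ?; rewrite /qmul /qone /=; congr Quat; ring. Qed.
Lemma qmulDl : left_distributive qmul qadd.
Proof. by case=> ? ? ? ?; case=> ? ? ? ?; case=> ? ? ? ?;
  rewrite /qmul /= /qadd /=; congr Quat; ring. Qed.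
Lemma qmulDr : right_distributive qmul qadd.
Proof. by case=> ? ? ? ?; case=> ? ? ? ?; case=> ? ? ? ?;
  rewrite /qmul /= /qadd /=; congr Quat; ring. Qed.
Lemma qone_neq0 : qone != 0.
Proof.
apply/eqP=> /(congr1 (@q0 F)) /= /eqP; rewrite oner_eq0 //.
Qed.

HB.instance Definition _ :=
  GRing.Zmodule_isNzRing.Build quat qmulA qmul1 qmulr1 qmulDl qmulDr qone_neq0.

Definition qscal (c : F) : quat := Quat c 0 0 0.

Definition qtrd (x : quat) : F := q0 x *+ 2.
Definition qbar (x : quat) : quat := qscal (qtrd x) - x.

Definition qunit (x : quat) : Prop := exists y : quat, x * y = 1 /\ y * x = 1.

End Quaternion.

Definition quat_division (F : fieldType) (a b : F) : Prop :=
  a != 0 /\ b != 0 /\ forall x : quat a b, x != 0 -> qunit x.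

Section Matrices.
Variables (F : fieldType) (a b : F) (n : nat).
Local Notation D := (quat a b).
Local Notation M := 'M[D]_n.

Definition mset := M -> Prop.

Definition invertible (g : M) : Prop :=
  exists h : M, g *m h = 1%:M /\ h *m g = 1%:M.

(* the inverse of an invertible matrix (arbitrary otherwise) *)
Definition minv (g : M) : M :=
  epsilon (inhabits g) (fun h : M => g *m h = 1%:M /\ h *m g = 1%:M).

Definition Jn : M := \matrix_(i < n, j < n) (if (i + j)%N == n.-1 then 1 else 0).

Definition ctr (g : M) : M := \matrix_(i < n, j < n) qbar (g j i).

Definition theta (g : M) : M := Jn *m minv (ctr g) *m Jn.

Definition Xset : mset := fun x => invertible x /\ x *m theta x = 1%:M.

Definition sact (g x : M) : M := g *m x *m minv (theta g).

Definition P0 : mset := fun g =>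
  invertible g /\ forall i j : 'I_n, (j < i)%N -> g i j = 0.

Definition Tset : mset := fun g =>
  invertible g /\ forall i j : 'I_n,
    (i != j -> g i j = 0) /\ (exists c : F, c != 0 /\ g i i = qscal a b c).

Definition M0 : mset := fun g =>
  invertible g /\ forall i j : 'I_n, (i != j -> g i j = 0) /\ qunit (g i i).

Definition NGT : mset := fun g =>
  invertible g /\
  (forall t, Tset t -> Tset (g *m t *m minv g)) /\
  (forall t, Tset t -> exists2 t', Tset t' & t = g *m t' *m minv g).

Definition morbit (H : mset) (x : M) : mset := fun y => exists2 h, H h & y = sact h x.

Definition mset_eq (A B : mset) : Prop := forall z, A z <-> B z.
Definition msetI (A B : mset) : mset := fun z => A z /\ B z.

End Matrices.

From HB Require Import structures.
From mathcomp Require Import all_boot all_order all_algebra.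
From mathcomp Require Import ring zify.
From mathcomp Require Import reals.
From Stdlib Require Import ClassicalEpsilon.

Set Implicit Arguments.
Unset Strict Implicit.
Unset Printing Implicit Defensive.

Import Order.TTheory GRing.Theory Num.Theory.
Local Open Scope ring_scope.

(* Put H = x J for x in X: H is invertible and hermitian for g* = ^t bar g, and
   the action g . x = g x theta(g)^-1 becomes the congruence H |-> g H g*.
   Since T contains diag(1, ..., n), whose entries are distinct central scalars
   when char F = 0, N_G(T) is exactly the set of invertible monomial matrices.
   Existence: symmetric Gaussian elimination with upper unitriangular row
   operations, from the last row upwards, makes any invertible hermitian H
   monomial (dividing by 2 when a row's pivot is off the diagonal). Uniqueness: if r is upper triangular and both N
   and r N r* are monomial, a downward induction on rows shows that they have
   the same pattern, and then r N r* = d N d* for the diagonal part d of r; so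
   (P0 . x) meets N_G(T) in a single M0-orbit. *)

Section QuaternionRing.
Variables (F : fieldType) (a b : F).
Local Notation D := (quat a b).
Local Notation qscal := (qscal a b).

Let qaddE (x y : D) : x + y = qadd x y. Proof. by []. Qed.
Let qoppE (x : D) : - x = qopp x. Proof. by []. Qed.
Let qmulE (x y : D) : x * y = qmul x y. Proof. by []. Qed.

Definition qnorm (x : D) : F :=
  q0 x ^+ 2 - a * q1 x ^+ 2 - b * q2 x ^+ 2 + a * b * q3 x ^+ 2.

Lemma qbarE (x : D) : qbar x = Quat (q0 x) (- q1 x) (- q2 x) (- q3 x).
Proof.
by case: x => x0 x1 x2 x3; rewrite /qbar /qtrd qaddE /qadd qoppE /qopp /=; congr Quat;
  rewrite /= ?mulr2n; ring.
Qed.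

Lemma qbarB : zmod_morphism (@qbar F a b).
Proof.
by case=> x0 x1 x2 x3 [y0 y1 y2 y3]; rewrite !qbarE !qaddE /qadd !qoppE /qopp /=;
  congr Quat; ring.
Qed.

HB.instance Definition _ := GRing.isZmodMorphism.Build D D (@qbar F a b) qbarB.

Lemma qbarM (x y : D) : qbar (x * y) = qbar y * qbar x.
Proof.
by case: x => x0 x1 x2 x3; case: y => y0 y1 y2 y3; rewrite !qbarE !qmulE /qmul /=;
  congr Quat; ring.
Qed.

Lemma qbarK : involutive (@qbar F a b).
Proof. by case=> x0 x1 x2 x3; rewrite !qbarE /=; congr Quat; ring. Qed.

Lemma qbar_scal c : qbar (qscal c) = qscal c.
Proof. by rewrite qbarE /=; congr Quat; ring. Qed.

Lemma qbar1 : qbar (1 : D) = 1. Proof. exact: qbar_scal. Qed.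

Lemma qbar_nat (c : bool) : qbar (c%:R : D) = c%:R.
Proof. by case: c; rewrite ?qbar1 ?raddf0. Qed.

Lemma qbar_eq0 (x : D) : (qbar x == 0) = (x == 0).
Proof. by rewrite -[RHS](inj_eq (can_inj qbarK)) raddf0. Qed.

Lemma qmul_bar (x : D) : x * qbar x = qscal (qnorm x).
Proof.
by case: x => x0 x1 x2 x3; rewrite qbarE qmulE /qmul /qnorm /=; congr Quat; ring.
Qed.

Lemma qbar_mul (x : D) : qbar x * x = qscal (qnorm x).
Proof.
by case: x => x0 x1 x2 x3; rewrite qbarE qmulE /qmul /qnorm /=; congr Quat; ring.
Qed.

Lemma qnormM (x y : D) : qnorm (x * y) = qnorm x * qnorm y.
Proof.
by case: x => x0 x1 x2 x3; case: y => y0 y1 y2 y3; rewrite qmulE /qmul /qnorm /=; ring.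
Qed.

Lemma qnorm1 : qnorm (1 : D) = 1. Proof. by rewrite /qnorm /=; ring. Qed.

Lemma qscal_central c (x : D) : qscal c * x = x * qscal c.
Proof. by case: x => x0 x1 x2 x3; rewrite !qmulE /qmul /=; congr Quat; ring. Qed.

Lemma qscalM (c d : F) : qscal (c * d) = qscal c * qscal d.
Proof. by rewrite qmulE /qmul /=; congr Quat; ring. Qed.

Lemma qscalD (c d : F) : qscal (c + d) = qscal c + qscal d.
Proof. by rewrite qaddE /qadd /=; congr Quat; ring. Qed.

Lemma qscalB (c d : F) : qscal (c - d) = qscal c - qscal d.
Proof. by rewrite qaddE /qadd qoppE /qopp /=; congr Quat; ring. Qed.

Lemma qscal_inj : injective qscal. Proof. by move=> c d []. Qed.

Lemma qscal_eq0 c : (qscal c == 0) = (c == 0).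
Proof. by rewrite -(inj_eq qscal_inj). Qed.

Definition qunitb (x : D) : bool := qnorm x != 0.
Definition qinv (x : D) : D := if qunitb x then qscal (qnorm x)^-1 * qbar x else x.

Lemma qmulVr : {in qunitb, left_inverse 1 qinv *%R}.
Proof.
by move=> x ux; rewrite /qinv (_ : qunitb x = true) // -mulrA qbar_mul -qscalM mulVf.
Qed.

Lemma qmulrV : {in qunitb, right_inverse 1 qinv *%R}.
Proof.
move=> x ux; rewrite /qinv (_ : qunitb x = true) //.
by rewrite mulrA -qscal_central -mulrA qmul_bar -qscalM mulVf.
Qed.

Lemma qunitrP (x y : D) : y * x = 1 /\ x * y = 1 -> qunitb x.
Proof.
case=> _ /(congr1 qnorm); rewrite qnormM qnorm1 /qunitb.
by apply: contra_eqN => /eqP->; rewrite mul0r eq_sym oner_eq0.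
Qed.

Lemma qinv_out : {in [predC qunitb], qinv =1 id}.
Proof. by move=> x; rewrite inE /qinv; case: ifP => // ux /negP[]. Qed.

HB.instance Definition _ :=
  GRing.NzRing_hasMulInverse.Build D qmulVr qmulrV qunitrP qinv_out.

End QuaternionRing.

Section QuaternionDivision.
Variables (F : fieldType) (a b : F).
Hypothesis HD : quat_division a b.
Local Notation D := (quat a b).

Lemma quat_unit (x : D) : (x \is a GRing.unit) = (x != 0).
Proof.
apply/idP/idP => [ux|/HD.2.2 [y [xy yx]]]; last by apply/unitrP; exists y.
by apply: contraTneq ux => ->; rewrite unitr0.
Qed.

Lemma qmul_eq0 (x y : D) : (x * y == 0) = (x == 0) || (y == 0).
Proof.
apply/eqP/idP => [xy0|/orP[]/eqP->]; rewrite ?mul0r ?mulr0 //.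
case: (eqVneq x 0) => //= x0; apply/eqP.
by rewrite -(mulKr (_ : x \is a GRing.unit) y) ?xy0 ?mulr0 ?quat_unit.
Qed.

Lemma qmul_neq0 (x y : D) : x != 0 -> y != 0 -> x * y != 0.
Proof. by rewrite qmul_eq0 negb_or => -> ->. Qed.

Lemma qunitE (x : D) : qunit x <-> x != 0.
Proof.
rewrite -quat_unit; split=> [[y [xy yx]]|/unitrP [y [yx xy]]]; last by exists y.
by apply/unitrP; exists y.
Qed.

End QuaternionDivision.

Section QuaternionMatrices.
Variables (F : fieldType) (a b : F) (n : nat).
Local Notation D := (quat a b).
Local Notation M := 'M[D]_n.
Local Notation J := (@Jn F a b n).

Lemma ctrK : involutive (@ctr F a b n).
Proof. by move=> A; apply/matrixP=> i j; rewrite !mxE qbarK. Qed.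

Lemma ctrM (A B : M) : ctr (A *m B) = ctr B *m ctr A.
Proof.
apply/matrixP=> i j; rewrite !mxE raddf_sum; apply: eq_bigr => k _.
by rewrite !mxE; apply: qbarM.
Qed.

Lemma ctr1 : ctr (1%:M : M) = 1%:M.
Proof. by apply/matrixP=> i j; rewrite !mxE eq_sym qbar_nat. Qed.

Lemma ctr_diag_mx (d : 'rV[D]_n) : ctr (diag_mx d) = diag_mx (map_mx (@qbar F a b) d).
Proof. by apply/matrixP=> i j; rewrite !mxE raddfMn eq_sym; case: eqVneq => [->|]. Qed.

Lemma eq_rev_ord (i j : 'I_n) : (j == rev_ord i) = (i == rev_ord j).
Proof. by apply/eqP/eqP => [->|->]; rewrite rev_ordK. Qed.

Lemma JnE i j : J i j = (j == rev_ord i)%:R.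
Proof.
rewrite mxE; suff -> : (i + j == n.-1)%N = (j == rev_ord i) by case: (j == rev_ord i).
apply/eqP/eqP => [ij|->]; last by rewrite /=; have := ltn_ord i; lia.
by apply/val_inj => /=; have := ltn_ord i; have := ltn_ord j; lia.
Qed.

Lemma mulmxJ (A : M) i j : (A *m J) i j = A i (rev_ord j).
Proof.
rewrite mxE (big_only1 (rev_ord j)) // ?JnE ?rev_ordK ?eqxx ?mulr1 // => k kj _.
by rewrite JnE eq_rev_ord (negbTE kj) mulr0.
Qed.

Lemma mulJmx (A : M) i j : (J *m A) i j = A (rev_ord i) j.
Proof.
rewrite mxE (big_only1 (rev_ord i)) // ?JnE ?eqxx ?mul1r // => k ki _.
by rewrite JnE (negbTE ki) mul0r.
Qed.

Lemma mulJJ : J *m J = 1%:M.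
Proof. by apply/matrixP=> i j; rewrite mulJmx JnE !mxE rev_ordK eq_sym. Qed.

Lemma mulmxJK (A : M) : A *m J *m J = A.
Proof. by rewrite -mulmxA mulJJ mulmx1. Qed.

Lemma ctrJ : ctr J = J.
Proof. by apply/matrixP=> i j; rewrite [ctr J i j]mxE !JnE eq_rev_ord qbar_nat. Qed.

Lemma minvP (g : M) : invertible g -> g *m minv g = 1%:M /\ minv g *m g = 1%:M.
Proof. exact: epsilon_spec. Qed.

Lemma minv_eq (g h : M) : g *m h = 1%:M -> h *m g = 1%:M -> minv g = h.
Proof.
move=> gh hg; have [_ mg] := minvP (ex_intro _ h (conj gh hg)).
by rewrite -[minv g]mulmx1 -gh mulmxA mg mul1mx.
Qed.

Lemma invertibleM (g h : M) : invertible g -> invertible h -> invertible (g *m h).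
Proof.
move=> [g' [gg' g'g]] [h' [hh' h'h]]; exists (h' *m g'); split.
  by rewrite mulmxA -(mulmxA g) hh' mulmx1 gg'.
by rewrite mulmxA -(mulmxA h') g'g mulmx1 h'h.
Qed.

Lemma invertible1 : invertible (1%:M : M).
Proof. by exists 1%:M; rewrite mulmx1. Qed.

Lemma invertible_minv (g : M) : invertible g -> invertible (minv g).
Proof. by move=> /minvP [gg' g'g]; exists g. Qed.

Lemma invertibleJ : invertible J.
Proof. by exists J; rewrite mulJJ. Qed.

Lemma invertible_ctr (g : M) : invertible g -> invertible (ctr g).
Proof. by move=> [h [gh hg]]; exists (ctr h); rewrite -!ctrM gh hg ctr1. Qed.

Lemma minv_theta (g : M) : invertible g -> minv (theta g) = J *m ctr g *m J.
Proof.
move=> /invertible_ctr /minvP [gg' g'g]; rewrite /theta.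
by apply: minv_eq; rewrite !mulmxA mulmxJK -(mulmxA J) ?gg' ?g'g mulmx1 mulJJ.
Qed.

Lemma sact_mulJ (g x : M) : invertible g -> sact g x *m J = g *m (x *m J) *m ctr g.
Proof. by move=> ig; rewrite /sact minv_theta // !mulmxA mulmxJK. Qed.

Lemma sactM (g h x : M) : invertible g -> invertible h ->
  sact g (sact h x) = sact (g *m h) x.
Proof.
move=> ig ih; have igh := invertibleM ig ih.
by rewrite -[LHS]mulmxJK -[RHS]mulmxJK !sact_mulJ // ctrM !mulmxA.
Qed.

Lemma sact1 (x : M) : sact 1%:M x = x.
Proof.
by rewrite -[LHS]mulmxJK (sact_mulJ _ invertible1) ctr1 mul1mx mulmx1 mulmxJK.
Qed.

Definition hermitian (H : M) := ctr H = H.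

Lemma hermitian_congr (p H : M) : hermitian H -> hermitian (p *m H *m ctr p).
Proof. by move=> hH; rewrite /hermitian !ctrM ctrK hH mulmxA. Qed.

Lemma hermitianE (H : M) i j : hermitian H -> H j i = qbar (H i j).
Proof. by move=> hH; rewrite -{1}hH mxE. Qed.

Lemma XsetE (x : M) : Xset x <-> invertible x /\ hermitian (x *m J).
Proof.
rewrite /Xset /hermitian ctrM ctrJ /theta.
have xthetaE : x *m (J *m minv (ctr x) *m J) = x *m J *m minv (ctr x) *m J.
  by rewrite !mulmxA.
split=> -[ix e]; split=> //; have [cc' c'c] := minvP (invertible_ctr ix).
  rewrite -[LHS]mul1mx -e xthetaE !mulmxA mulmxJK.
  by rewrite -(mulmxA _ (minv _)) c'c mulmx1.
by rewrite xthetaE -e -(mulmxA J) cc' mulmx1 mulJJ.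
Qed.

Lemma Xset_sact (g x : M) : invertible g -> Xset x -> Xset (sact g x).
Proof.
move=> ig /XsetE [ix hx]; apply/XsetE; split; last first.
  by rewrite sact_mulJ //; exact: hermitian_congr.
have := invertible_ctr ig; have := @invertibleJ.
by rewrite /sact minv_theta // => iJ icg; do !apply: invertibleM.
Qed.

End QuaternionMatrices.

Section MonomialMatrices.
Variables (R : nzRingType) (n : nat).
Local Notation M := 'M[R]_n.

(* [clean_row] and [pivot] are locked: otherwise unification problems such as
   [pivot (r *m N *m ctr r) i =?= pivot N i] unfold the matrix products and diverge. *)
Definition clean_row (A : M) (r : 'I_n) : bool :=
  locked [exists c, [&& A r c != 0, [forall j, (j != c) ==> (A r j == 0)]
                      & [forall i, (i != r) ==> (A i c == 0)]]].

Lemma clean_rowP (A : M) r : reflect (exists c, [/\ A r c != 0,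
  forall j, j != c -> A r j = 0 & forall i, i != r -> A i c = 0]) (clean_row A r).
Proof.
rewrite /clean_row -lock.
apply: (iffP existsP) => [[c /and3P [Arc /forallP Ar /forallP Ac]]|[c [Arc Ar Ac]]].
  exists c; split=> // [j jc|i ir]; apply/eqP.
    exact: implyP (Ar j) jc.
  exact: implyP (Ac i) ir.
exists c; apply/and3P; split=> //; apply/forallP.
  by move=> j; apply/implyP => /Ar ->.
by move=> i; apply/implyP => /Ac ->.
Qed.

Definition monomial (A : M) := forall r, clean_row A r.

Definition pivot (A : M) (i : 'I_n) : 'I_n :=
  locked (odflt i [pick c | A i c != 0]).

Lemma pivot_neq0 (A : M) i : clean_row A i -> A i (pivot A i) != 0.
Proof.
move=> /clean_rowP [c [Aic _ _]]; rewrite /pivot -lock.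
by case: pickP => [//|/(_ c)]; rewrite Aic.
Qed.

Lemma clean_row_pivot (A : M) i j : clean_row A i -> A i j != 0 -> j = pivot A i.
Proof.
move=> ci; have := pivot_neq0 ci; case/clean_rowP: ci => c [_ Ai _].
have onlyc k : A i k != 0 -> k = c.
  by move=> Aik; apply/eqP; apply: contraNT Aik => /Ai ->.
by move=> /onlyc -> /onlyc.
Qed.

Lemma clean_row_pivot_col (A : M) i i' : clean_row A i ->
  A i' (pivot A i) != 0 -> i' = i.
Proof.
move=> ci; have := pivot_neq0 ci; case/clean_rowP: ci => c [_ Ai Ac] Aip.
have -> : pivot A i = c by apply/eqP; apply: contraNT Aip => /Ai ->.
by move=> Ai'c; apply/eqP; apply: contraNT Ai'c => /Ac ->.
Qed.

Lemma monomial_eq0 (A : M) i j : monomial A -> j != pivot A i -> A i j = 0.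
Proof. by move=> mA; apply: contraNeq => /(clean_row_pivot (mA i)) ->. Qed.

Lemma pivot_inj (A : M) : monomial A -> injective (pivot A).
Proof.
by move=> mA i i' e; apply: (clean_row_pivot_col (mA i')); rewrite -e pivot_neq0.
Qed.

Lemma monomial_mulmx (A B : M) i j : monomial A ->
  (A *m B) i j = A i (pivot A i) * B (pivot A i) j.
Proof.
move=> mA; rewrite mxE (big_only1 (pivot A i)) // => k kp _.
by rewrite monomial_eq0 ?mul0r.
Qed.

Lemma monomial_support (A B : M) : (forall i j, (B i j == 0) = (A i j == 0)) ->
  monomial A -> monomial B.
Proof.
move=> AB mA r; have /clean_rowP [c [Arc Ar Ac]] := mA r; apply/clean_rowP.
exists c; split; first by rewrite AB.
- by move=> j /Ar /eqP; rewrite -AB => /eqP.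
- by move=> i /Ac /eqP; rewrite -AB => /eqP.
Qed.

Lemma mulmx_neq0 (A B : M) i j : (A *m B) i j != 0 ->
  exists k, A i k != 0 /\ B k j != 0.
Proof.
move=> ABij.
have /existsP [k /andP [Aik Bkj]] : [exists k, (A i k != 0) && (B k j != 0)].
  apply: contraNT ABij; rewrite negb_exists => /forallP AB0; rewrite mxE big1 // => k _.
  by have := AB0 k; rewrite negb_and !negbK => /orP [] /eqP ->; rewrite ?mul0r ?mulr0.
by exists k.
Qed.

Lemma offdiag0_diag_mx (A : M) : (forall i j, i != j -> A i j = 0) ->
  A = diag_mx (\row_i A i i).
Proof.
by move=> A0; apply/matrixP => i j; rewrite !mxE; case: eqVneq => [->|/A0 ->].
Qed.

End MonomialMatrices.

Lemma pchar0_natr_inj (F : fieldType) : [pchar F] =i pred0 ->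
  injective (fun k : nat => k%:R : F).
Proof.
move=> /pcharf0P F0.
suff le_inj k l : (k <= l)%N -> k%:R = l%:R :> F -> k = l.
  by move=> k l e; case: (leqP k l) => [/le_inj|/ltnW/le_inj /(_ (esym e))]; auto.
move=> kl e; apply/eqP; rewrite eqn_leq kl /= -subn_eq0 -F0 natrB //.
by rewrite e subrr.
Qed.

Section TriangularDiagonal.
Variables (F : fieldType) (a b : F) (n : nat).
Hypothesis HD : quat_division a b.
Local Notation D := (quat a b).
Local Notation M := 'M[D]_n.

Definition upper (p : M) := forall i j : 'I_n, (j < i)%N -> p i j = 0.

Lemma upper_linv (p q : M) : upper p -> q *m p = 1%:M ->
  upper q /\ forall j, q j j * p j j = 1.
Proof.
move=> up qp.
suff qpE (j : 'I_n) : (forall i : 'I_n, (j < i)%N -> q i j = 0) /\ q j j * p j j = 1.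
  by split=> [i j /(qpE j).1|j]; last exact: (qpE j).2.
have [k] := ubnP j; elim: k j => // k IHk j /ltnSE jk.
have colE (i : 'I_n) : (j <= i)%N -> (q *m p) i j = q i j * p j j.
  move=> ji; rewrite mxE (big_only1 j) // => l lj _.
  case: (ltngtP l j) => [lj'|jl|/val_inj ejl]; last by rewrite ejl eqxx in lj.
  - by rewrite ((IHk l (leq_trans lj' jk)).1 i) ?mul0r // (leq_trans lj').
  - by rewrite up ?mulr0.
have qpjj : q j j * p j j = 1 by rewrite -colE // qp mxE eqxx.
split=> // i ji; apply/eqP; have := colE i (ltnW ji).
rewrite qp mxE -val_eqE (gtn_eqF ji) => /esym/eqP.
rewrite qmul_eq0 // => /orP [//|/eqP pjj0].
by move: qpjj; rewrite pjj0 mulr0 => /eqP; rewrite eq_sym oner_eq0.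
Qed.

Lemma P0_mul (p q : M) : P0 p -> P0 q -> P0 (p *m q).
Proof.
move=> [ip up] [iq uq]; split=> [|i j ji]; first exact: invertibleM.
rewrite mxE big1 // => k _; case: (ltnP k i) => ki; first by rewrite up ?mul0r.
by rewrite uq ?mulr0 // (leq_trans ji).
Qed.

Lemma P0_1 : P0 (1%:M : M).
Proof.
split=> [|i j ji]; first exact: invertible1.
by rewrite mxE -val_eqE (gtn_eqF ji).
Qed.

Lemma P0_minv (p : M) : P0 p -> P0 (minv p).
Proof.
move=> [ip up]; split; first exact: invertible_minv.
exact: (upper_linv up (minvP ip).2).1.
Qed.

Lemma P0_diag_neq0 (p : M) j : P0 p -> p j j != 0.
Proof.
move=> [ip up]; have := (upper_linv up (minvP ip).2).2 j.
by apply: contra_eq_neq => ->; rewrite mulr0 eq_sym oner_neq0.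
Qed.

Lemma diag_invertible (d : 'rV[D]_n) : (forall i, d 0 i != 0) ->
  invertible (diag_mx d).
Proof.
move=> d0; exists (diag_mx (\row_i (d 0 i)^-1)).
by rewrite !mulmx_diag -!diag_const_mx; split; congr diag_mx; apply/matrixP => i j;
  rewrite !mxE ?mulrV ?mulVr ?quat_unit.
Qed.

Lemma M0P (m : M) :
  M0 m <-> exists2 d : 'rV_n, m = diag_mx d & forall i, d 0 i != 0.
Proof.
split=> [[_ m0]|[d -> d0]].
  exists (\row_i m i i); last by move=> i; rewrite mxE -qunitE //; exact: (m0 i i).2.
  by apply: offdiag0_diag_mx => i j /(m0 i j).1.
split; first exact: diag_invertible.
by move=> i j; split=> [ij|]; rewrite !mxE ?(negbTE ij) // eqxx mulr1n qunitE.
Qed.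

Lemma M0_P0 (m : M) : M0 m -> P0 m.
Proof.
move=> Mm; split; first exact: Mm.1.
by move: Mm => /M0P [d -> _] i j ji; rewrite mxE -val_eqE (gtn_eqF ji).
Qed.

Lemma TsetP (t : M) : Tset t <->
  exists2 c : 'rV[F]_n, t = diag_mx (map_mx (qscal a b) c) & forall i, c 0 i != 0.
Proof.
split=> [[_ t0]|[c -> c0]].
  exists (\row_i q0 (t i i)).
    rewrite {1}(offdiag0_diag_mx (fun i j ij => (t0 i j).1 ij)); congr diag_mx.
    by apply/matrixP => i j; rewrite !mxE; have [c [_ ->]] := (t0 j j).2.
  by move=> i; rewrite mxE; have [c [c0 ->]] := (t0 i i).2.
split; first by apply: diag_invertible => i; rewrite mxE qscal_eq0.
move=> i j; split=> [ij|]; first by rewrite mxE (negbTE ij).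
by exists (c 0 i); rewrite !mxE eqxx mulr1n.
Qed.

End TriangularDiagonal.

Section MonomialNormalizer.
Variables (F : fieldType) (a b : F) (n : nat).
Hypothesis HD : quat_division a b.
Local Notation D := (quat a b).
Local Notation M := 'M[D]_n.
Local Notation J := (@Jn F a b n).

Lemma monomial_mulJ (A : M) : monomial (A *m J) <-> monomial A.
Proof.
have mJ (B : M) : monomial B -> monomial (B *m J).
  move=> mB r; have /clean_rowP [c [Brc Br Bc]] := mB r; apply/clean_rowP.
  exists (rev_ord c); split=> [|j jc|i ir]; rewrite mulmxJ ?rev_ordK //; last exact: Bc.
  by apply: Br; apply: contraNneq jc => <-; rewrite rev_ordK.
by split=> [/mJ|/mJ //]; rewrite mulmxJK.
Qed.

Lemma monomial_diag_congr (d : 'rV[D]_n) (A : M) : (forall i, d 0 i != 0) ->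
  monomial A -> monomial (diag_mx d *m A *m ctr (diag_mx d)).
Proof.
move=> d0; apply: monomial_support => i j.
rewrite ctr_diag_mx mul_mx_diag mul_diag_mx !mxE !qmul_eq0 // qbar_eq0.
by rewrite (negbTE (d0 i)) (negbTE (d0 j)) orbF.
Qed.

Lemma invertible_row_neq0 (A : M) i : invertible A -> exists j, A i j != 0.
Proof.
move=> [B [AB _]]; apply/existsP; apply: contraT; rewrite negb_exists => /forallP A0.
have := congr1 (fun C : M => C i i) AB; rewrite !mxE eqxx big1 => [/eqP|k _].
  by rewrite eq_sym oner_eq0.
by have := A0 k; rewrite negbK => /eqP ->; rewrite mul0r.
Qed.

Lemma monomial_minv (y : M) : invertible y -> monomial y -> monomial (minv y).
Proof.
move=> iy my; have [yz _] := minvP iy; set z := minv y in yz *.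
have yzE i j : y i (pivot y i) * z (pivot y i) j = (i == j)%:R.
  by rewrite -monomial_mulmx // yz mxE.
have z0 i j : j != i -> z (pivot y i) j = 0.
  move=> ji; apply/eqP; have := yzE i j; rewrite eq_sym (negbTE ji) => /eqP.
  by rewrite qmul_eq0 // (negbTE (pivot_neq0 (my i))).
move=> c; have /codomP [i ->] := injF_onto (pivot_inj my) c.
apply/clean_rowP; exists i; split; [|exact: z0|].
  by apply: contra_eq_neq (yzE i i) => ->; rewrite eqxx mulr0 mulr1n eq_sym oner_neq0.
move=> c' c'i; have /codomP [k ek] := injF_onto (pivot_inj my) c'; rewrite ek z0 //.
by apply: contraNneq c'i => ->; rewrite ek.
Qed.

Lemma monomial_conj_Tset (y t : M) : invertible y -> monomial y -> Tset t ->
  Tset (y *m t *m minv y).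
Proof.
move=> iy my /(TsetP HD) [c -> c0]; apply/(TsetP HD).
exists (\row_i c 0 (pivot y i)); last by move=> i; rewrite mxE.
suff -> : y *m diag_mx (map_mx (qscal a b) c) =
          diag_mx (map_mx (qscal a b) (\row_i c 0 (pivot y i))) *m y.
  by rewrite -mulmxA (minvP iy).1 mulmx1.
apply/matrixP => i k; rewrite mul_mx_diag mul_diag_mx !mxE.
have [->|kp] := eqVneq k (pivot y i); first by rewrite qscal_central.
by rewrite monomial_eq0 // mul0r mulr0.
Qed.

Lemma monomial_NGT (y : M) : invertible y -> monomial y -> NGT y.
Proof.
move=> iy my; split=> //; split=> [t|t Tt]; first exact: monomial_conj_Tset.
have [yz zy] := minvP iy.
exists (minv y *m t *m y); last by rewrite !mulmxA yz mul1mx -mulmxA yz mulmx1.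
have := monomial_conj_Tset (invertible_minv iy) (monomial_minv iy my) Tt.
by rewrite (minv_eq zy yz).
Qed.

Lemma invertible_row_support1_monomial (y : M) : invertible y ->
  (forall i k l, y i k != 0 -> y i l != 0 -> k = l) -> monomial y.
Proof.
move=> iy y1 i; have [c yic] := invertible_row_neq0 i iy.
have rowE r j : y r c != 0 -> (y *m minv y) r j = y r c * minv y c j.
  move=> yrc; rewrite mxE (big_only1 c) // => k kc _.
  have [->|yrk] := eqVneq (y r k) 0; first by rewrite mul0r.
  by rewrite (y1 _ _ _ yrc yrk) eqxx in kc.
apply/clean_rowP; exists c; split=> // [j jc|i' i'i].
  by apply/eqP; apply: contraNT jc => /(y1 _ _ _ yic) ->.
apply/eqP; apply: contraT => yi'c.
have one : y i c * minv y c i = 1 by rewrite -(rowE i i yic) (minvP iy).1 mxE eqxx.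
have zero : y i' c * minv y c i = 0.
  by rewrite -(rowE i' i yi'c) (minvP iy).1 mxE (negbTE i'i).
have yci : minv y c i != 0 by apply: contra_eq_neq one => ->; rewrite mulr0 eq_sym oner_neq0.
by move/eqP: zero; rewrite qmul_eq0 // (negbTE yi'c) (negbTE yci).
Qed.

Hypothesis F0 : [pchar F] =i pred0.

Lemma NGT_row_support1 (y : M) i k l : NGT y -> y i k != 0 -> y i l != 0 -> k = l.
Proof.
move=> [iy [yTy _]].
pose t0 : M := diag_mx (map_mx (qscal a b) (\row_(j < n) (j.+1)%:R)).
have Tt0 : Tset t0.
  by apply/(TsetP HD); exists (\row_j (j.+1)%:R) => // j; rewrite mxE ((pcharf0P _).1 F0).
have /(TsetP HD) [c tE _] := yTy _ Tt0.
have yt0E : y *m t0 = diag_mx (map_mx (qscal a b) c) *m y.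
  by rewrite -tE -mulmxA (minvP iy).2 mulmx1.
have yE j : y i j != 0 -> c 0 i = (j.+1)%:R.
  move=> yij; have := congr1 (fun A : M => A i j) yt0E.
  rewrite mul_mx_diag mul_diag_mx !mxE qscal_central => /eqP.
  rewrite -subr_eq0 -mulrBr -qscalB.
  by rewrite qmul_eq0 // (negbTE yij) qscal_eq0 subr_eq0 => /eqP <-.
by move=> /yE eik /yE; rewrite eik => /(pchar0_natr_inj F0) [] /val_inj.
Qed.

Lemma NGT_monomial (y : M) : NGT y -> monomial y.
Proof.
move=> Ny; apply: invertible_row_support1_monomial; first exact: Ny.1.
by move=> i k l; apply: NGT_row_support1.
Qed.

End MonomialNormalizer.

Section HermitianElimination.
Variables (F : fieldType) (a b : F) (n : nat).
Hypothesis HD : quat_division a b.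
Hypothesis F2 : (2%:R : F) != 0.
Local Notation D := (quat a b).
Local Notation M := 'M[D]_n.

Definition P0_congr (H H' : M) := exists2 p, P0 p & H' = p *m H *m ctr p.

Lemma P0_congr_refl (H : M) : P0_congr H H.
Proof. by exists 1%:M; [exact: P0_1 | rewrite ctr1 mul1mx mulmx1]. Qed.

Lemma P0_congr_trans (H1 H2 H3 : M) :
  P0_congr H1 H2 -> P0_congr H2 H3 -> P0_congr H1 H3.
Proof.
by move=> [p Pp ->] [q Pq ->]; exists (q *m p); [exact: P0_mul | rewrite ctrM !mulmxA].
Qed.

Lemma P0_congr_hermitian (H H' : M) : P0_congr H H' -> hermitian H -> hermitian H'.
Proof. by move=> [p _ ->]; apply: hermitian_congr. Qed.

Lemma P0_congr_invertible (H H' : M) : P0_congr H H' -> invertible H -> invertible H'.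
Proof.
by move=> [p [ip _] ->] iH; do !apply: invertibleM => //; apply: invertible_ctr.
Qed.

Definition rowop (s : 'I_n) (al : 'I_n -> D) : M :=
  1%:M + \matrix_(i, j) (if j == s then al i else 0).

Lemma rowop_mulmx (s : 'I_n) (al : 'I_n -> D) (A : M) i j :
  (rowop s al *m A) i j = A i j + al i * A s j.
Proof.
rewrite mxE; under eq_bigr do rewrite !mxE mulrDl.
rewrite big_split /= (big_only1 i) ?(big_only1 s) // ?eqxx ?mul1r // => k ks _.
  by rewrite (negbTE ks) mul0r.
by rewrite eq_sym (negbTE ks) mul0r.
Qed.

Lemma mulmx_ctr_rowop (s : 'I_n) (al : 'I_n -> D) (A : M) i j :
  (A *m ctr (rowop s al)) i j = A i j + A i s * qbar (al j).
Proof.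
rewrite mxE; under eq_bigr do rewrite !mxE raddfD /= mulrDr qbar_nat.
rewrite big_split /= (big_only1 j) ?(big_only1 s) // ?eqxx ?mulr1 // => k ks _.
  by rewrite (negbTE ks) raddf0 mulr0.
by rewrite eq_sym (negbTE ks) mulr0.
Qed.

Lemma rowop_congrE (s : 'I_n) (al : 'I_n -> D) (H : M) i j :
  (rowop s al *m H *m ctr (rowop s al)) i j =
  H i j + al i * H s j + H i s * qbar (al j) + al i * H s s * qbar (al j).
Proof. by rewrite mulmx_ctr_rowop !rowop_mulmx mulrDl !addrA. Qed.

Lemma rowop_P0 (s : 'I_n) (al : 'I_n -> D) :
  (forall i : 'I_n, (s <= i)%N -> al i = 0) -> P0 (rowop s al).
Proof.
move=> al0; have als := al0 s (leqnn s).
have rowopK (al1 al2 : 'I_n -> D) : al2 s = 0 -> (forall i, al1 i + al2 i = 0) ->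
    rowop s al1 *m rowop s al2 = 1%:M.
  move=> al2s al12; apply/matrixP => i j; rewrite rowop_mulmx !mxE.
  have [->|js] := eqVneq j s; last by rewrite !addr0 mulr0n mulr0 addr0.
  by rewrite al2s addr0 mulr1n mulr1 -addrA (addrC (al2 i)) al12 addr0.
split.
  exists (rowop s (fun i => - al i)); split; apply: rowopK.
  - by rewrite als oppr0.
  - by move=> i; rewrite addrN.
  - exact: als.
  - by move=> i; rewrite addNr.
move=> i j ji; rewrite /rowop !mxE -val_eqE (gtn_eqF ji) add0r.
by case: eqVneq => [js|//]; apply: al0; rewrite -js ltnW.
Qed.

Lemma hermitian_clean_pivot (H : M) r : hermitian H -> clean_row H r ->
  clean_row H (pivot H r).
Proof.
move=> hH cr; apply/clean_rowP; exists r; split.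
- by rewrite (hermitianE _ _ hH) qbar_eq0 pivot_neq0.
- move=> j jr; rewrite (hermitianE _ _ hH); apply/eqP; rewrite qbar_eq0.
  by apply: contraNT jr => /(clean_row_pivot_col cr) ->.
- move=> i ip; rewrite (hermitianE _ _ hH); apply/eqP; rewrite qbar_eq0.
  by apply: contraNT ip => /(clean_row_pivot cr) ->.
Qed.

Lemma unclean_clean_eq0 (H : M) u v : hermitian H -> ~~ clean_row H u ->
  clean_row H v -> H u v = 0 /\ H v u = 0.
Proof.
move=> hH nu cv; suff Hvu : H v u = 0 by rewrite (hermitianE _ _ hH) Hvu raddf0.
apply/eqP; apply: contraNT nu => /(clean_row_pivot cv) ->.
exact: hermitian_clean_pivot.
Qed.

Lemma rowop_congr_clean (H : M) (s : 'I_n) (al : 'I_n -> D) :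
  hermitian H -> ~~ clean_row H s ->
  (forall i, clean_row H i -> al i = 0) ->
  forall r, clean_row H r -> clean_row (rowop s al *m H *m ctr (rowop s al)) r.
Proof.
move=> hH ns al0 r cr; set c := pivot H r; have cc := hermitian_clean_pivot hH cr.
have [Hsr Hrs] := unclean_clean_eq0 hH ns cr.
have [Hsc Hcs] := unclean_clean_eq0 hH ns cc.
set H' := rowop s al *m H *m ctr (rowop s al).
have rowE j : H' r j = H r j by rewrite rowop_congrE (al0 r cr) Hrs !(mul0r, addr0).
have colE i : H' i c = H i c by rewrite rowop_congrE (al0 c cc) Hsc raddf0 !(mulr0, addr0).
apply/clean_rowP; exists c; split=> [|j jc|i ir]; rewrite ?rowE ?colE.
- exact: pivot_neq0.
- by apply/eqP; apply: contraNT jc => /(clean_row_pivot cr) ->.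
- by apply/eqP; apply: contraNT ir => /(clean_row_pivot_col cr) ->.
Qed.


Lemma hermitian_clean_diag (H : M) (m : 'I_n) : hermitian H -> H m m != 0 ->
  (forall i, i != m -> H i m = 0) -> clean_row H m.
Proof.
move=> hH Hmm Hm0; apply/clean_rowP; exists m; split=> // j jm.
by rewrite (hermitianE _ _ hH) Hm0 ?raddf0.
Qed.

Lemma clear_column_above (H : M) (m k : 'I_n) : hermitian H ->
  ~~ clean_row H m -> ~~ clean_row H k -> (k <= m)%N -> H k m != 0 ->
  (forall i : 'I_n, (k < i)%N -> H i m = 0) ->
  exists H', [/\ P0_congr H H', forall r, clean_row H r -> clean_row H' r,
                 H' k m = H k m & forall i, i != k -> H' i m = 0].
Proof.
move=> hH nm nk km Hkm Hm0.
pose al (i : 'I_n) := if (i < k)%N then - (H i m * (H k m)^-1) else 0.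
have alm : al m = 0 by rewrite /al ltnNge km.
set H' := rowop k al *m H *m ctr (rowop k al).
have colE (i : 'I_n) : H' i m = H i m + al i * H k m.
  by rewrite rowop_congrE alm raddf0 !mulr0 !addr0.
exists H'; split.
- by exists (rowop k al) => //; apply: rowop_P0 => i ki; rewrite /al ltnNge ki.
- apply: rowop_congr_clean => // i ci.
  by rewrite /al (unclean_clean_eq0 hH nm ci).2 mul0r oppr0 if_same.
- by rewrite colE /al ltnn mul0r addr0.
- move=> i ik; rewrite colE /al; case: ltnP => [_|ki].
    by rewrite mulNr mulrVK ?quat_unit // addrN.
  by rewrite mul0r addr0 Hm0 // ltn_neqAle ki andbT eq_sym val_eqE.
Qed.

Lemma clear_pivot_column (H : M) (m k : 'I_n) : hermitian H -> (k < m)%N ->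
  ~~ clean_row H m -> ~~ clean_row H k ->
  (forall i : 'I_n, (m < i)%N -> clean_row H i) ->
  H k m != 0 -> (forall i, i != k -> H i m = 0) ->
  exists H', [/\ P0_congr H H', forall r, clean_row H r -> clean_row H' r & clean_row H' m].
Proof.
move=> hH km nm nk cgt Hkm Hm0.
have mk : m != k by rewrite -val_eqE (gtn_eqF km).
have Hmm : H m m = 0 := Hm0 m mk.
have Hmj j : j != k -> H m j = 0 by move=> jk; rewrite (hermitianE _ _ hH) Hm0 ?raddf0.
set h := H m k; have Hkm_h : H k m = qbar h := hermitianE _ _ hH.
have h0 : h != 0 by rewrite -qbar_eq0 -Hkm_h.
(* The factor 1/2 at row k: the congruence adds [al k * h] and its conjugate to the
   hermitian entry [H k k], so each of them must contribute half of it. *)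
pose al (i : 'I_n) := if (i < m)%N
  then - ((if i == k then H k k * qscal a b 2^-1 else H i k) * h^-1) else 0.
have alm : al m = 0 by rewrite /al ltnn.
set H' := rowop m al *m H *m ctr (rowop m al).
have colE (i : 'I_n) : H' i k = H i k + al i * h + H i m * qbar (al k).
  by rewrite rowop_congrE Hmm mulr0 mul0r addr0.
exists H'; split.
- by exists (rowop m al) => //; apply: rowop_P0 => i mi; rewrite /al ltnNge mi.
- apply: rowop_congr_clean => // i ci; have ik : i != k by apply: contraNneq nk => <-.
  by rewrite /al (negbTE ik) (unclean_clean_eq0 hH nk ci).2 mul0r oppr0 if_same.
apply/clean_rowP; exists k; split=> [|j jk|i im].
- by rewrite rowop_congrE alm Hmm !(mul0r, mulr0, addr0).
- by rewrite rowop_congrE alm Hmm Hmj // !(mul0r, addr0).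
rewrite colE; have [->|ik] := eqVneq i k.
  have alkh : al k * h = - (H k k * qscal a b 2^-1).
    by rewrite /al km eqxx mulNr mulrVK ?quat_unit //.
  have halves : qscal a b 2^-1 + qscal a b 2^-1 = 1.
    have halves_F : (2^-1 + 2^-1 : F) = 1 by field.
    by rewrite -qscalD halves_F.
  rewrite Hkm_h -qbarM alkh raddfN /= qbarM qbar_scal -(hermitianE _ _ hH).
  by rewrite qscal_central -addrA -opprD -mulrDr halves mulr1 subrr.
rewrite Hm0 // mul0r addr0 /al (negbTE ik); case: ltnP => [_|mi].
  by rewrite mulNr mulrVK ?quat_unit // addrN.
have mi' : (m < i)%N by rewrite ltn_neqAle mi andbT eq_sym val_eqE.
by rewrite (unclean_clean_eq0 hH nk (cgt i mi')).2 mul0r addr0.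
Qed.

Lemma clean_row_step (H : M) (m : 'I_n) :
  invertible H -> hermitian H -> ~~ clean_row H m ->
  (forall i : 'I_n, (m < i)%N -> clean_row H i) ->
  exists H', [/\ P0_congr H H', forall r, clean_row H r -> clean_row H' r & clean_row H' m].
Proof.
move=> iH hH nm cgt; have [j0 Hmj0] := invertible_row_neq0 m iH.
have [k Hmk kmax] := @arg_maxnP _ j0 (fun j => H m j != 0) val Hmj0.
have Hm0 (i : 'I_n) : (k < i)%N -> H i m = 0.
  move=> ki; rewrite (hermitianE _ _ hH); apply/eqP; rewrite qbar_eq0.
  by apply: contraTT ki => /kmax; rewrite -leqNgt.
have nk : ~~ clean_row H k.
  by apply: contra Hmk => /(unclean_clean_eq0 hH nm) [-> _].
have km : (k <= m)%N by rewrite leqNgt; apply: contra nk => /cgt.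
have Hkm : H k m != 0 by rewrite (hermitianE _ _ hH) qbar_eq0.
have [H1 [c1 sub1 H1km H1m0]] := clear_column_above hH nm nk km Hkm Hm0.
have hH1 := P0_congr_hermitian c1 hH.
have [cm1|nm1] := boolP (clean_row H1 m); first by exists H1.
have km' : (k < m)%N.
  rewrite ltn_neqAle km andbT; apply: contra nm1 => /eqP/val_inj ekm; subst k.
  by apply: hermitian_clean_diag => //; rewrite H1km.
have H1km0 : H1 k m != 0 by rewrite H1km.
have nk1 : ~~ clean_row H1 k.
  apply: contra nm1 => ck; rewrite (clean_row_pivot ck H1km0).
  exact: hermitian_clean_pivot.
have cgt1 (i : 'I_n) : (m < i)%N -> clean_row H1 i by move=> /cgt /sub1.
have [H2 [c2 sub2 cm2]] := clear_pivot_column hH1 km' nm1 nk1 cgt1 H1km0 H1m0.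
exists H2; split=> [|r /sub1 /sub2 //|//]; exact: P0_congr_trans c1 c2.
Qed.

Lemma hermitian_P0_congr_monomial (H : M) : invertible H -> hermitian H ->
  exists2 H', P0_congr H H' & monomial H'.
Proof.
move=> iH hH.
suff bottom k : exists2 H', P0_congr H H' &
    forall r : 'I_n, (n - k <= r)%N -> clean_row H' r.
  by have [H' cH' clH'] := bottom n; exists H' => // r; apply: clH'; rewrite subnn.
elim: k => [|k [H1 c1 cl1]].
  by exists H => [|r]; [exact: P0_congr_refl | rewrite subn0 leqNgt ltn_ord].
have [nk|kn] := leqP n k; first by exists H1 => // r _; apply: cl1; lia.
set m := rev_ord (Ordinal kn).
have cl (H' : M) : (forall r, clean_row H1 r -> clean_row H' r) -> clean_row H' m ->
    forall r : 'I_n, (n - k.+1 <= r)%N -> clean_row H' r.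
  move=> sub cm r; rewrite leq_eqVlt => /orP [/eqP mr|mr]; last by apply/sub/cl1; lia.
  by rewrite (_ : r = m) //; apply: val_inj.
have [cm|nm] := boolP (clean_row H1 m); first by exists H1; last exact: cl.
have above (r : 'I_n) : (m < r)%N -> clean_row H1 r.
  by move=> mr; apply: cl1; rewrite /= in mr; lia.
have [H2 [c2 sub2 cm2]] := clean_row_step (P0_congr_invertible c1 iH)
  (P0_congr_hermitian c1 hH) nm above.
by exists H2; [exact: P0_congr_trans c1 c2 | apply: cl].
Qed.

End HermitianElimination.

Section UpperCongruenceOfMonomials.
Variables (F : fieldType) (a b : F) (n : nat).
Hypothesis HD : quat_division a b.
Local Notation M := 'M[quat a b]_n.

Variables (r N : M).
Hypothesis Pr : P0 r.
Hypothesis mN : monomial N.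
Hypothesis mrN : monomial (r *m N *m ctr r).
Local Notation N' := (r *m N *m ctr r).

Let upper_minv : upper (minv r) := (P0_minv HD Pr).2.
Let minvN' : minv r *m N' = N *m ctr r.
Proof. by rewrite !mulmxA (minvP Pr.1).2 mul1mx. Qed.

Lemma P0_congr_pivot i : pivot N' i = pivot N i.
Proof.
have [k] := ubnP (n - i); elim: k i => [|k IHk] i ltik.
  by exfalso; rewrite ltn0 in ltik.
have : (minv r *m N') i (pivot N i) != 0.
  rewrite minvN' monomial_mulmx // mxE qmul_neq0 ?pivot_neq0 //.
  by rewrite qbar_eq0 (P0_diag_neq0 HD).
case/mulmx_neq0 => l [ril N'l].
have il : (i <= l)%N by rewrite leqNgt; apply: contra ril => /upper_minv ->.
have N'lE := esym (clean_row_pivot (mrN l) N'l).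
have [eli|li] := eqVneq l i; first by subst l; exact: N'lE.
have ltil : (i < l)%N by rewrite ltn_neqAle il andbT eq_sym val_eqE.
have ltlk : (n - l < k)%N by have := ltn_ord l; lia.
have := IHk l ltlk; rewrite N'lE => /(pivot_inj mN) eil.
by exfalso; rewrite eil ltnn in ltil.
Qed.

Lemma P0_congr_pivot_entry i :
  N' i (pivot N i) = r i i * N i (pivot N i) * qbar (r (pivot N i) (pivot N i)).
Proof.
set c := pivot N i.
have colN' l : l != i -> N' l c = 0.
  move=> li; apply/eqP; apply: contraNT li => N'lc.
  by apply/eqP; apply: (clean_row_pivot_col (mrN i)); rewrite P0_congr_pivot.
have colE : (minv r *m N') i c = minv r i i * N' i c.
  by rewrite mxE (big_only1 i) => // l li _; rewrite colN' ?mulr0.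
have rowE : (N *m ctr r) i c = N i c * qbar (r c c).
  by rewrite (monomial_mulmx _ _ _ mN) mxE.
have [_ rr1] := upper_linv HD upper_minv (minvP Pr.1).1.
rewrite -[LHS]mul1r -(rr1 i) -mulrA -colE minvN' rowE.
exact: mulrA.
Qed.

Lemma P0_congr_monomial_diag :
  N' = diag_mx (\row_i r i i) *m N *m ctr (diag_mx (\row_i r i i)).
Proof.
apply/matrixP => i j; set lhs := N' i j.
rewrite ctr_diag_mx mul_mx_diag mul_diag_mx !mxE {}/lhs.
have [->|jc] := eqVneq j (pivot N i); first exact: P0_congr_pivot_entry.
have N'0 : N' i j = 0 by apply: (monomial_eq0 mrN); rewrite P0_congr_pivot.
by rewrite N'0 (monomial_eq0 mN jc) mulr0 mul0r.
Qed.

End UpperCongruenceOfMonomials.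

Section Orbits.
Variables (F : fieldType) (a b : F) (n : nat).
Hypothesis HD : quat_division a b.
Hypothesis F0 : [pchar F] =i pred0.
Local Notation M := 'M[quat a b]_n.
Local Notation J := (@Jn F a b n).

Let F2 : (2%:R : F) != 0. Proof. by rewrite ((pcharf0P F).1 F0). Qed.

Lemma P0_orbit_eq (x y z : M) : morbit (@P0 F a b n) x y ->
  morbit (@P0 F a b n) x z <-> morbit (@P0 F a b n) y z.
Proof.
move=> [q Pq ->]; have [iq _] := Pq; split=> [[p Pp ->]|[p Pp ->]].
  have ipq := invertibleM Pp.1 (invertible_minv iq).
  exists (p *m minv q); first exact: P0_mul Pp (P0_minv HD Pq).
  by rewrite (sactM x ipq iq) -mulmxA (minvP iq).2 mulmx1.
by exists (p *m q); [exact: P0_mul | exact: (sactM x Pp.1 iq)].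
Qed.

Lemma P0_orbit_meets_NGT (x : M) : Xset x ->
  exists y, morbit (@P0 F a b n) x y /\ NGT y.
Proof.
move=> Xx; have /XsetE [ix hx] := Xx.
have iJ := @invertibleJ F a b n.
have [_ [p Pp ->] mH] := hermitian_P0_congr_monomial HD F2 (invertibleM ix iJ) hx.
exists (sact p x); split; first by exists p.
have /XsetE [isx _] := Xset_sact Pp.1 Xx.
have msx : monomial (sact p x).
  by apply: (monomial_mulJ (sact p x)).1; rewrite (sact_mulJ x Pp.1).
exact: (monomial_NGT HD isx msx).
Qed.

Lemma P0_orbit_NGT_M0_orbit (x y : M) :
  Xset x -> morbit (@P0 F a b n) x y -> NGT y ->
  mset_eq (msetI (morbit (@P0 F a b n) x) (@NGT F a b n)) (morbit (@M0 F a b n) y).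
Proof.
move=> Xx oxy Ny z; have myJ := (monomial_mulJ y).2 (NGT_monomial HD F0 Ny).
split=> [[oxz Nz]|[m Mm ez]].
  have [r Pr ezr] := (P0_orbit_eq z oxy).1 oxz.
  have mzJ := (monomial_mulJ z).2 (NGT_monomial HD F0 Nz).
  have d0 i : (\row_k r k k) 0 i != 0 by rewrite mxE (P0_diag_neq0 HD).
  exists (diag_mx (\row_k r k k)); first by apply/(M0P HD); exists (\row_k r k k).
  rewrite -[z]mulmxJK -[sact _ y]mulmxJK; congr (_ *m J).
  rewrite (sact_mulJ y (diag_invertible HD d0)) -(P0_congr_monomial_diag HD Pr myJ _).
    by rewrite ezr (sact_mulJ y Pr.1).
  by rewrite -(sact_mulJ y Pr.1) -ezr.
have [d md d0] := (M0P HD m).1 Mm; have im := Mm.1.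
split; first by apply: (P0_orbit_eq z oxy).2; exists m => //; exact: (M0_P0 HD).
have Xy : Xset y by case: oxy => q [iq _] ->; exact: Xset_sact iq Xx.
have /XsetE [iz _] : Xset z by rewrite ez; exact: Xset_sact.
apply: (monomial_NGT HD iz); apply: (monomial_mulJ z).1.
rewrite ez (sact_mulJ y im) md; exact: (monomial_diag_congr HD d0 myJ).
Qed.

End Orbits.

Theorem lemma3p1 (R : realType) (F : fieldType) (abs : F -> R) (a b : F)
  (n : nat)
  (HF : nonarch_local_field_char0 abs)
  (HD : quat_division a b) :
  (* (P_0 . x) meets N_G(T) for every x in X *)
  (forall x : 'M[quat a b]_n, Xset x ->
     exists y, morbit (@P0 F a b n) x y /\ NGT y) /\
  (* the map P_0.x |-> (P_0.x) cap N_G(T) is well defined, with values  *)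
  (* M_0-orbits in X cap N_G(T) ...                                     *)
  (forall x : 'M[quat a b]_n, Xset x ->
     exists2 y, msetI (@Xset F a b n) (@NGT F a b n) y &
       mset_eq (msetI (morbit (@P0 F a b n) x) (@NGT F a b n))
               (morbit (@M0 F a b n) y)) /\
  (* ... injective ... *)
  (forall x x' : 'M[quat a b]_n, Xset x -> Xset x' ->
     mset_eq (msetI (morbit (@P0 F a b n) x) (@NGT F a b n))
             (msetI (morbit (@P0 F a b n) x') (@NGT F a b n)) ->
     mset_eq (morbit (@P0 F a b n) x) (morbit (@P0 F a b n) x')) /\
  (* ... and surjective onto M_0 \ (X cap N_G(T)) *)
  (forall y : 'M[quat a b]_n, msetI (@Xset F a b n) (@NGT F a b n) y ->
     exists2 x, Xset x &
       mset_eq (msetI (morbit (@P0 F a b n) x) (@NGT F a b n))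
               (morbit (@M0 F a b n) y)).
Proof.
have F0 := nlf_char0 HF.
have orbitX x y : Xset x -> morbit (@P0 F a b n) x y -> Xset y.
  by move=> Xx [p [ip _] ->]; exact: Xset_sact.
split; first exact: P0_orbit_meets_NGT HD F0.
split.
  move=> x Xx; have [y [oxy Ny]] := P0_orbit_meets_NGT HD F0 Xx.
  exists y; last exact: (P0_orbit_NGT_M0_orbit HD F0 Xx oxy Ny).
  by split=> //; exact: orbitX x y Xx oxy.
split.
  move=> x x' Xx Xx' e z; have [y [oxy Ny]] := P0_orbit_meets_NGT HD F0 Xx.
  have [ox'y _] := (e y).1 (conj oxy Ny).
  have Ey := P0_orbit_eq HD z oxy; have E'y := P0_orbit_eq HD z ox'y.
  by split=> [/Ey /E'y | /E'y /Ey].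
move=> y [Xy Ny]; exists y => //; apply: (P0_orbit_NGT_M0_orbit HD F0) => //.
by exists 1%:M; [exact: P0_1 | rewrite sact1].
Qed.
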